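(* Let $(x_k)_{k\ge0}$ be indeterminates, define $a_n=x_n$ if $n=2^k-1$ for some integer $k\ge0$ and $a_n=0$ otherwise, and let $d(n)=\det\left(a_{i+j}\right)_{i,j=0}^{n-1}$ and $D(n)=\det\left(a_{i+j+1}\right)_{i,j=0}^{n-1}$, with $d(0)=D(0)=1$. Then for all $n\ge0$, $$\frac{d(n)\,d(n+1)}{D(n)^2}=(-1)^n x_0.$$ *)

From HB Require Import structures.
From mathcomp Require Import all_boot all_order all_algebra.
From mathcomp Require Import mpoly.
Set Implicit Arguments. Unset Strict Implicit. Unset Printing Implicit Defensive.
Import GRing.Theory.
Local Open Scope ring_scope.

(* n is of the form 2^k - 1 for some k >= 0, i.e. n+1 = 2^k (k <= n+1 suffices). *)
Definition is_pow2m1 (n : nat) : bool := [exists k : 'I_n.+2, n.+1 == 2 ^ k]%N.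

(* The indeterminate x_k in the polynomial ring Z[x_0,...,x_{m-1}]
   (only indices k < m are ever used below). *)
Definition xv (m k : nat) : {mpoly int[m]} :=
  if @insub nat (fun k => k < m)%N _ k is Some i then 'X_i else 0.

Definition aseq (m n : nat) : {mpoly int[m]} := if is_pow2m1 n then xv m n else 0.

Definition hd (m n : nat) : {mpoly int[m]} :=
  \det (\matrix_(i < n, j < n) aseq m (i + j)%N).
Definition hD (m n : nat) : {mpoly int[m]} :=
  \det (\matrix_(i < n, j < n) aseq m (i + j).+1).

From mathcomp Require Import all_boot all_order all_algebra.
From mathcomp Require Import fingroup perm mpoly zify ring.

(* Since a_k vanishes unless k + 1 is a power of two, if 2^K = 2p + s + c then the
   Hankel matrix (a_(c+i+j)) of size p + s has nonzero entries only on the antidiagonal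
   c + i + j = 2^K - 1 and in the triangle 2(i + j) < 2p + s - 1.  Every permutation
   contributing to its determinant thus sends the last s rows onto that antidiagonal,
   which splits off the factor x_(2^K-1)^s det J_s, J_s the s x s exchange matrix.
   Writing n = p + 2t + 1 with 2^K = 2(p + t + 1) expresses d(n), d(n+1) and D(n)
   through d(p+1), d(p) and D(p), and the identity follows by strong induction. *)

Set Implicit Arguments.
Unset Strict Implicit.
Unset Printing Implicit Defensive.

Import GRing.Theory.
Local Open Scope ring_scope.

Definition exchange_mx (R : pzRingType) (s : nat) : 'M[R]_s :=
  \matrix_(i, j) (i + j == s.-1)%N%:R.

Lemma det_exchange_mxS (R : comPzRingType) s :
  \det (exchange_mx R s.+1) = (-1) ^+ s * \det (exchange_mx R s).
Proof.
rewrite (expand_det_row _ ord0) (bigD1 ord_max) //= big1 ?addr0; last first.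
  move=> j /negPf j_neq_max; rewrite mxE /= add0n.
  by rewrite (_ : (j == s :> nat) = false) ?mul0r // -j_neq_max; apply/eqP/val_inj.
rewrite mxE /= add0n eqxx mul1r /cofactor /= add0n; congr (_ * \det _).
apply/matrixP => i j; rewrite !mxE /= /bump [(s <= j)%N]leqNgt ltn_ord add0n add1n.
by case: s i j => [[]|s] i j //=; rewrite eqSS.
Qed.

Lemma det_exchange_mxSS (R : comPzRingType) s :
  \det (exchange_mx R s.+2) = - \det (exchange_mx R s).
Proof.
by rewrite !det_exchange_mxS mulrA -exprD addSn addnn -signr_odd /= odd_double mulN1r.
Qed.

Lemma sqr_det_exchange_mx (R : comPzRingType) s : \det (exchange_mx R s) ^+ 2 = 1.
Proof.
elim: s => [|s IHs]; first by rewrite det_mx00 expr1n.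
by rewrite det_exchange_mxS exprMn sqrr_sign IHs mulr1.
Qed.

Lemma det_exchange_mx_neq0 (R : idomainType) s : \det (exchange_mx R s) != 0.
Proof.
apply/eqP => det0; move: (sqr_det_exchange_mx R s).
by rewrite det0 expr0n => /eqP; rewrite eq_sym oner_eq0.
Qed.

Lemma det_restrict (R : comPzRingType) n (M : 'M[R]_n) (P : 'I_n -> 'I_n -> bool) :
  (forall s : 'S_n, (forall i, M i (s i) != 0) -> forall i, P i (s i)) ->
  \det (\matrix_(i, j) (if P i j then M i j else 0)) = \det M.
Proof.
move=> supp_P; apply: eq_bigr => s _; congr (_ * _).
have [/forallP nz_s | /forallPn[i /negPn/eqP Mi0]] := boolP [forall i, M i (s i) != 0].
  by apply: eq_bigr => i _; rewrite mxE supp_P.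
by rewrite (bigD1 i) // [RHS](bigD1 i) //= mxE Mi0 if_same !mul0r.
Qed.

Section AntidiagonalPermutation.

Variables (p s : nat) (sigma : 'S_(p + s)).
Local Notation N := (p.*2 + s).-1.
Hypothesis sigma_supp :
  forall i : 'I_(p + s), (i + sigma i = N)%N \/ ((i + sigma i).*2 < N)%N.

Lemma perm_lower_rows_antidiag (i : 'I_(p + s)) : (p <= i)%N -> (i + sigma i = N)%N.
Proof.
move=> le_p_i; have lt_i := ltn_ord i.
have [le_N_2i | lt_2i_N] := leqP N i.*2.
  by case: (sigma_supp i) => //; lia.
have lt_j : (N - i < p + s)%N by lia.
pose r := (sigma^-1)%g (Ordinal lt_j).
have sigma_r : (sigma r = N - i :> nat)%N by rewrite permKV.
have r_i : r = i :> nat by case: (sigma_supp r); rewrite sigma_r; lia.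
by rewrite -(val_inj r_i) sigma_r; lia.
Qed.

Lemma perm_upper_rows_stable (i : 'I_(p + s)) : (i < p)%N -> (sigma i < p)%N.
Proof.
move=> lt_i_p; rewrite ltnNge; apply/negP => le_p_sigma_i.
have lt_sigma_i := ltn_ord (sigma i).
have lt_r : (N - sigma i < p + s)%N by lia.
pose r := Ordinal lt_r.
have le_p_r : (p <= r)%N by rewrite /=; lia.
have sigma_r : sigma r = sigma i.
  by apply/val_inj; have := perm_lower_rows_antidiag le_p_r; rewrite /=; lia.
by move: le_p_r; rewrite (perm_inj sigma_r) leqNgt lt_i_p.
Qed.

End AntidiagonalPermutation.

Lemma det_antidiag_block (R : comPzRingType) p s (M : 'M[R]_(p + s)) (x : R) :
  (forall i j : 'I_(p + s), M i j != 0 ->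
     (i + j = (p.*2 + s).-1)%N \/ ((i + j).*2 < (p.*2 + s).-1)%N) ->
  (forall i j : 'I_(p + s), (p <= i)%N -> (i + j = (p.*2 + s).-1)%N -> M i j = x) ->
  \det M = \det (ulsubmx M) * (x ^+ s * \det (exchange_mx R s)).
Proof.
move=> M_supp M_antidiag.
pose P (i j : 'I_(p + s)) :=
  if (p <= i)%N then (i + j == (p.*2 + s).-1)%N else (j < p)%N.
rewrite -(det_restrict (P := P)); last first.
  move=> sigma nz_sigma i; have sigma_supp j := M_supp j _ (nz_sigma j).
  rewrite /P; case: (leqP p i) => [le_p_i | lt_i_p].
    by apply/eqP; apply: perm_lower_rows_antidiag.
  exact: perm_upper_rows_stable.
rewrite -detZ -(det_ublock _ 0); congr (\det _); apply/matrixP => i j.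
rewrite mxE /P -[i]splitK -[j]splitK.
case: (split i) => a; case: (split j) => b /=; have lt_a := ltn_ord a; have lt_b := ltn_ord b.
- by rewrite block_mxEul !mxE leqNgt lt_a lt_b.
- by rewrite block_mxEur mxE leqNgt lt_a ltnNge leq_addr.
- by rewrite block_mxEdl mxE leq_addr; case: eqP => //; lia.
rewrite block_mxEdr !mxE leq_addr.
have -> : (p + a + (p + b) == (p.*2 + s).-1)%N = (a + b == s.-1)%N.
  by apply/eqP/eqP; lia.
case: eqP => [sum_ab | _]; last by rewrite mulr0.
by rewrite mulr1; apply: M_antidiag => /=; lia.
Qed.

Lemma is_pow2m1P k : reflect (exists K, k.+1 = 2 ^ K)%N (is_pow2m1 k).
Proof.
apply: (iffP existsP) => [[K /eqP ->] | [K def_k]]; first by exists K.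
have lt_K : (K < k.+2)%N by rewrite def_k ltnS ltnW // ltn_expl.
by exists (Ordinal lt_K); apply/eqP.
Qed.

Lemma is_pow2m1_pred K : is_pow2m1 (2 ^ K).-1.
Proof. by apply/is_pow2m1P; exists K; rewrite prednK ?expn_gt0. Qed.

Lemma is_pow2m1_dichotomy k K : is_pow2m1 k -> (k.+1 < 2 ^ K.+1)%N ->
  (k.+1 = 2 ^ K \/ (k.+1).*2 <= 2 ^ K)%N.
Proof.
move=> /is_pow2m1P[j ->]; rewrite ltn_exp2l // ltnS leq_eqVlt => /orP[/eqP-> | lt_jK].
  by left.
by right; rewrite -mul2n -expnS leq_exp2l.
Qed.

Lemma pow2_decomposition n : (0 < n)%N ->
  exists K p t, (n = p + t.*2.+1 /\ 2 ^ K = (p + t).+1.*2)%N.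
Proof.
move=> n_gt0; have /andP[lo hi] := trunc_log_bounds (isT : (1 < 2)%N) n_gt0.
move: lo hi; set K := trunc_log 2 n; rewrite expnS => lo hi.
exists K.+1, (2 ^ K - (n - 2 ^ K)).-1%N, (n - 2 ^ K)%N; rewrite expnS; lia.
Qed.

Section HankelPow2.

Variables (R : comPzRingType) (a : nat -> R).
Hypothesis a_supp : forall k, ~~ is_pow2m1 k -> a k = 0.

Definition hankel c n := \det (\matrix_(i < n, j < n) a (c + i + j)).

Lemma hankel_size0 c : hankel c 0 = 1.
Proof. exact: det_mx00. Qed.

Lemma hankel_size1 c : hankel c 1 = a c.
Proof. by rewrite /hankel det_mx11 mxE !addn0. Qed.

Lemma hankel_split c K p s : (2 ^ K = p.*2 + s + c)%N ->
  hankel c (p + s) = hankel c p * (a (2 ^ K).-1 ^+ s * \det (exchange_mx R s)).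
Proof.
move=> def_K; rewrite /hankel (det_antidiag_block (x := a (2 ^ K).-1)).
- by congr (\det _ * _); apply/matrixP => i j; rewrite !mxE.
- move=> i j; have lt_i := ltn_ord i; have lt_j := ltn_ord j; rewrite mxE.
  have [pow_ij _ | /a_supp->] := boolP (is_pow2m1 (c + i + j)); last by rewrite eqxx.
  have lt_K : ((c + i + j).+1 < 2 ^ K.+1)%N by rewrite expnS; lia.
  by case: (is_pow2m1_dichotomy pow_ij lt_K); lia.
- by move=> i j _ sum_ij; have := ltn_ord i; rewrite mxE => lt_i; congr a; lia.
Qed.

Lemma hankel_identity n :
  hankel 0 n * hankel 0 n.+1 = (-1) ^+ n * a 0 * hankel 1 n ^+ 2.
Proof.
elim/ltn_ind: n => n IHn; have [-> | n_gt0] := posnP n.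
  by rewrite !hankel_size0 hankel_size1 mul1r expr1n !mulr1.
have [K [p [t [def_n def_K]]]] := pow2_decomposition n_gt0.
have {IHn} IHp := IHn p ltac:(lia).
set x := a (2 ^ K).-1; set E := exchange_mx R.
have hankel0_n : hankel 0 n = hankel 0 p.+1 * (x ^+ t.*2 * \det (E t.*2)).
  by rewrite def_n -addSnnS (@hankel_split 0 K) //; lia.
have hankel0_n1 : hankel 0 n.+1 = hankel 0 p * (x ^+ t.*2.+2 * \det (E t.*2.+2)).
  by rewrite def_n -addnS (@hankel_split 0 K) //; lia.
have hankel1_n : hankel 1 n = hankel 1 p * (x ^+ t.*2.+1 * \det (E t.*2.+1)).
  by rewrite def_n (@hankel_split 1 K) //; lia.
have pow_x : x ^+ t.*2 * x ^+ t.*2.+2 = (x ^+ t.*2.+1) ^+ 2.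
  by rewrite -exprD -exprM; congr (x ^+ _); lia.
have sign_n : (-1) ^+ n = - (-1) ^+ p :> R.
  by rewrite def_n exprD -[(-1) ^+ t.*2.+1]signr_odd oddS odd_double expr1 mulrN1.
rewrite hankel0_n hankel0_n1 hankel1_n sign_n det_exchange_mxSS.
transitivity (- (hankel 0 p * hankel 0 p.+1) * (x ^+ t.*2.+1) ^+ 2 * \det (E t.*2) ^+ 2).
  by rewrite -pow_x; ring.
by rewrite IHp !exprMn !sqr_det_exchange_mx; ring.
Qed.

End HankelPow2.

Lemma hankel1_neq0 (R : idomainType) (a : nat -> R) n :
    (forall k, ~~ is_pow2m1 k -> a k = 0) ->
    (forall k, (k < n.*2)%N -> is_pow2m1 k -> a k != 0) ->
  hankel a 1 n != 0.
Proof.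
move=> a_supp; elim/ltn_ind: n => n IHn a_nz; have [-> | n_gt0] := posnP n.
  by rewrite hankel_size0 oner_neq0.
have [K [p [t [def_n def_K]]]] := pow2_decomposition n_gt0.
have def_K1 : (2 ^ K = p.*2 + t.*2.+1 + 1)%N by lia.
rewrite def_n (hankel_split a_supp def_K1) !mulf_neq0 ?expf_neq0 ?det_exchange_mx_neq0 //.
  by apply: IHn => [|k lt_k]; [lia | apply: a_nz; lia].
by apply: (a_nz _ _ (is_pow2m1_pred K)); lia.
Qed.

Lemma xv_neq0 m k : (k < m)%N -> xv m k != 0.
Proof.
move=> lt_km; rewrite /xv insubT; apply/eqP => /(congr1 (@msupp _ _)).
by rewrite msupp0 msuppX.
Qed.

Theorem lemma5p8 (n m : nat) (hm : (2 * n < m)%N) :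
  hD m n != 0 /\ hd m n * hd m n.+1 = (-1) ^+ n * xv m 0 * hD m n ^+ 2.
Proof.
have aseq_supp k : ~~ is_pow2m1 k -> aseq m k = 0 by rewrite /aseq => /negbTE->.
have aseq0 : aseq m 0 = xv m 0 by rewrite /aseq (is_pow2m1_pred 0).
(* [hd m] and [hD m] are [hankel (aseq m) 0] and [hankel (aseq m) 1] up to conversion. *)
split; first by apply: hankel1_neq0 => // k lt_k pow_k; rewrite /aseq pow_k xv_neq0 //; lia.
by rewrite -aseq0; apply: hankel_identity.
Qed.
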